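(* Let $L\in\mathbb{R}^{N\times N}$ be a nonnegative liabilities matrix, let $\mathbf{e}\in\mathbb{R}^N_{\ge 0}$ be the cash-on-hand vector, and let $C\ge 0$ be a given total cash injection amount. Assume the network is such that for every cash injection vector $\mathbf{c}\ge\mathbf{0}$ the clearing payment vector $\mathbf{p}(\mathbf{c})$ exists and is unique. Then the problem \[ \text{minimize } D=\mathbf{1}^T(\bar{\mathbf p}-\mathbf p(\mathbf c)) \text{ over } \mathbf c\ge \mathbf 0 \text{ with } \mathbf 1^T\mathbf c=C \] has a solution, and one is obtained by solving the linear program \[ \text{maximize } \mathbf 1^T\mathbf p \text{ over } (\mathbf c,\mathbf p)\in\mathbb R^{2N} \] subject to $\mathbf 1^T\mathbf c=C$, $\mathbf c\ge\mathbf 0$, $\mathbf 0\le\mathbf p\le\bar{\mathbf p}$, $\mathbf p\le\Pi^T\mathbf p+\mathbf e+\mathbf c$: namely, if $(\mathbf p^*,\mathbf c^* )$ is an optimal solution of this linear program, then $\mathbf c^*$ attains the minimum of $D$ over all allocations $\mathbf c\ge\mathbf 0$ with $\mathbf 1^T\mathbf c=C$ (and $\mathbf p^*=\mathbf p(\mathbf c^* )$).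
   Context: Financial network model: $N$ nodes; $L_{ij}\ge 0$ is the amount node $i$ owes node $j$, all due at a single date. All vector inequalities are componentwise; $\mathbf 0,\mathbf 1$ are the all-zeros and all-ones vectors in $\mathbb R^N$. $\bar p_i=\sum_j L_{ij}$ is the total amount node $i$ owes. $\Pi_{ij}=L_{ij}/\bar p_i$ if $\bar p_i\neq 0$ and $\Pi_{ij}=0$ otherwise; $\Pi$ is the matrix with entries $\Pi_{ij}$. $\mathbf e\ge\mathbf 0$ is cash on hand and $\mathbf c\ge\mathbf 0$ is external cash injection. Given a payment vector $\mathbf p$ ($p_i$ = total amount node $i$ actually pays its creditors), node $i$ receives $q_i=\sum_j \Pi_{ji}p_j$ and has total funds $r_i=q_i+e_i+c_i$. A clearing payment vector for given $L,\mathbf e,\mathbf c$ is a vector $\mathbf p$ with $p_i=\min(\bar p_i, r_i)$ for every $i$, i.e. $\mathbf p=\min(\bar{\mathbf p},\Pi^T\mathbf p+\mathbf e+\mathbf c)$ componentwise (a node pays its liabilities in full if its funds suffice, otherwise pays all of its funds, distributed to creditors in proportion to the amounts owed). $D=\mathbf 1^T(\bar{\mathbf p}-\mathbf p)$ is the total unpaid liabilities. *)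

From HB Require Import structures.
From mathcomp Require Import all_boot all_order all_algebra.
Set Implicit Arguments. Unset Strict Implicit. Unset Printing Implicit Defensive.
Import Order.TTheory GRing.Theory Num.Theory.
Local Open Scope ring_scope.

Section Network.
Variables (R : realFieldType) (N : nat).
Implicit Types (L : 'M[R]_N) (v e c p : 'I_N -> R).

Definition pbar L (i : 'I_N) : R := \sum_(j < N) L i j.

Definition Pi L (i j : 'I_N) : R :=
  if pbar L i != 0 then L i j / pbar L i else 0.

Definition funds L e c p (i : 'I_N) : R :=
  \sum_(j < N) Pi L j i * p j + e i + c i.

Definition is_clearing L e c p : Prop :=
  forall i, p i = Num.min (pbar L i) (funds L e c p i).

Definition total_unpaid L p : R := \sum_(i < N) (pbar L i - p i).

Definition admissible (C : R) c : Prop :=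
  (forall i, 0 <= c i) /\ \sum_(i < N) c i = C.

Definition lp_feasible L e (C : R) c p : Prop :=
  admissible C c /\
  (forall i, 0 <= p i /\ p i <= pbar L i) /\
  (forall i, p i <= funds L e c p i).

Definition lp_optimal L e (C : R) c p : Prop :=
  lp_feasible L e C c p /\
  forall c' p', lp_feasible L e C c' p' ->
    \sum_(i < N) p' i <= \sum_(i < N) p i.

End Network.

From HB Require Import structures.
From mathcomp Require Import all_boot all_order all_algebra.
From mathcomp Require Import ring lra.
Import Order.TTheory GRing.Theory Num.Theory.
Local Open Scope ring_scope.

(* If some p_i were
   strictly below min(pbar_i, funds_i), raising p_i alone would stay feasible
   (funds are monotone in p since Pi >= 0) and improve the objective, so p is a
   clearing vector.  The nonnegative part of a clearing vector p' for any
   admissible c' is LP-feasible, hence 1^T p' <= 1^T p, i.e. D(p) <= D(p').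

   The LP attains its optimum.  Over an arbitrary ordered field
   there is no compactness argument, so this is proved by Fourier-Motzkin
   elimination: projecting a linear system onto one coordinate gives a
   one-variable system, whose largest solution exists when it is bounded; a
   linear objective f is maximized by maximizing an extra coordinate s subject
   to s <= f . x.  The LP is feasible (all of C at one node, p = 0) and bounded
   by 1^T pbar.  Uniqueness of clearing vectors then identifies the clearing
   vector of the optimal injection with the LP optimum. *)

Section FourierMotzkin.
Variables (R : realFieldType) (T : finType).
Implicit Types (a : {ffun T -> R}) (x : T -> R) (k : T) (t : R).

Definition constraint := ({ffun T -> R} * R)%type.
Implicit Types (c p q : constraint) (S : seq constraint).

Definition lhs a x : R := \sum_v a v * x v.
Definition sat1 (c : constraint) x : bool := lhs c.1 x <= c.2.
Definition sat (S : seq constraint) x : bool := all (sat1^~ x) S.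

Definition setv x k t : T -> R := fun v => if v == k then t else x v.

Definition rest k a x : R := \sum_(v | v != k) a v * x v.
Definition resid k (c : constraint) x : R := c.2 - rest k c.1 x.

Definition bound k (c : constraint) x : R := resid k c x / c.1 k.

Lemma lhs_split k a x : lhs a x = a k * x k + rest k a x.
Proof. by rewrite /lhs (bigD1 k). Qed.

Lemma rest_setv k a x t : rest k a (setv x k t) = rest k a x.
Proof. by apply: eq_bigr => v /negbTE; rewrite /setv => ->. Qed.

Lemma sat1_setv k c x t : sat1 c (setv x k t) = (c.1 k * t <= resid k c x).
Proof. by rewrite /sat1 (lhs_split k) rest_setv /setv eqxx /resid lerBrDr. Qed.

Lemma sat1_setv_pos k c x t :
  0 < c.1 k -> sat1 c (setv x k t) = (t <= bound k c x).
Proof. by move=> ck; rewrite sat1_setv /bound ler_pdivlMr // mulrC. Qed.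

Lemma sat1_setv_neg k c x t :
  c.1 k < 0 -> sat1 c (setv x k t) = (bound k c x <= t).
Proof. by move=> ck; rewrite sat1_setv /bound ler_ndivrMr // mulrC. Qed.

Lemma sat1_setv_zero k c x t : c.1 k = 0 -> sat1 c (setv x k t) = sat1 c x.
Proof.
by move=> ck; rewrite sat1_setv /sat1 (lhs_split k) ck !mul0r add0r /resid subr_ge0.
Qed.

(* The positive combination of p (with p.1 k > 0) and q (with q.1 k < 0)
   that cancels the coefficient of x k. *)
Definition comb k (p q : constraint) : constraint :=
  ([ffun v => - q.1 k * p.1 v + p.1 k * q.1 v], - q.1 k * p.2 + p.1 k * q.2).

Lemma lhs_comb k p q x :
  lhs (comb k p q).1 x = - q.1 k * lhs p.1 x + p.1 k * lhs q.1 x.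
Proof.
rewrite /lhs !mulr_sumr -big_split; apply: eq_bigr => v _.
by rewrite ffunE mulrDl !mulrA.
Qed.

Lemma sat1_comb k p q x : 0 < p.1 k -> q.1 k < 0 ->
  sat1 (comb k p q) x = (bound k q x <= bound k p x).
Proof.
move=> pk qk; rewrite /sat1 lhs_comb !(lhs_split k) /bound.
rewrite ler_pdivlMr // mulrAC ler_ndivrMr //.
by rewrite -[LHS]subr_ge0 -[RHS]subr_ge0 /resid /=; congr (0 <= _); ring.
Qed.

Definition elim1 k (S : seq constraint) : seq constraint :=
  [seq c : constraint <- S | c.1 k == 0] ++
  [seq comb k p q | p <- [seq c : constraint <- S | 0 < c.1 k],
                    q <- [seq c : constraint <- S | c.1 k < 0]].

Lemma exists_between (ls us : seq R) :
  {in ls & us, forall l u, l <= u} ->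
  exists t, {in ls, forall l, l <= t} /\ {in us, forall u, t <= u}.
Proof.
case: ls => [|l0 ls] H.
  by exists (\big[Order.min/0]_(u <- us) u); split=> // u uus; exact: ge_bigmin_seq.
exists (\big[Order.max/l0]_(l <- l0 :: ls) l); split=> [l lls|u uus].
  exact: le_bigmax_seq.
by rewrite big_seq; apply: bigmax_le => [|l lls]; apply: H; rewrite ?mem_head.
Qed.

Lemma elim1P k S x : sat (elim1 k S) x <-> exists t, sat S (setv x k t).
Proof.
rewrite /sat /elim1 all_cat all_filter; split.
- case/andP=> /allP zeroS /all_allpairsP combS.
  pose lows := [seq bound k q x | q <- S & q.1 k < 0].
  pose ups := [seq bound k p x | p <- S & 0 < p.1 k].
  have [|t [lo_t t_up]] := @exists_between lows ups.
    move=> _ _ /mapP[q + ->] /mapP[p + ->].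
    rewrite !mem_filter => /andP[qk qS] /andP[pk pS].
    by rewrite -sat1_comb // combS // mem_filter ?pk ?qk.
  exists t; apply/allP => c cS; case: (ltgtP (c.1 k) 0) => ck.
  + by rewrite sat1_setv_neg //; apply: lo_t; apply: map_f; rewrite mem_filter ck.
  + by rewrite sat1_setv_pos //; apply: t_up; apply: map_f; rewrite mem_filter ck.
  + by rewrite sat1_setv_zero //; apply: (implyP (zeroS c cS)); rewrite ck.
- case=> t /allP satS; apply/andP; split.
    apply/allP => c cS; apply/implyP => /eqP ck.
    by rewrite -(sat1_setv_zero _ _ _ t ck) satS.
  apply/all_allpairsP => p q; rewrite !mem_filter => /andP[pk pS] /andP[qk qS].
  rewrite /= sat1_comb //; apply: (@le_trans _ _ t).
    by rewrite -(sat1_setv_neg _ _ _ t qk) satS.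
  by rewrite -(sat1_setv_pos _ _ _ t pk) satS.
Qed.

Fixpoint elims (ks : seq T) S : seq constraint :=
  if ks is k :: ks' then elim1 k (elims ks' S) else S.

Lemma sat_eq S x y : x =1 y -> sat S x = sat S y.
Proof.
by move=> xy; apply: eq_all => c; rewrite /sat1 /lhs; under eq_bigr do rewrite xy.
Qed.

Lemma elimsP ks S x :
  sat (elims ks S) x <-> exists y, (forall v, v \notin ks -> y v = x v) /\ sat S y.
Proof.
elim: ks x => [|k ks IH] x /=.
  split=> [Sx|[y [xy Sy]]]; first by exists x.
  by rewrite (@sat_eq _ _ y) // => v; rewrite xy.
rewrite elim1P; split.
  case=> t /IH [y [xy Sy]]; exists y; split=> // v.
  rewrite inE negb_or => /andP[vk vks].
  by rewrite xy // /setv (negbTE vk).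
case=> y [xy Sy]; exists (y k); apply/IH; exists y; split=> // v vks.
rewrite /setv; case: eqP => [->//|/eqP vk]; apply: xy.
by rewrite inE negb_or vk.
Qed.

Definition sat_line (E : seq (R * R)) t : bool := all (fun ab => ab.1 * t <= ab.2) E.

Lemma line_max E t0 M : sat_line E t0 -> (forall t, sat_line E t -> t <= M) ->
  exists m, sat_line E m /\ forall t, sat_line E t -> t <= m.
Proof.
move=> E_t0 bounded; have t0M := bounded t0 E_t0; move/allP: E_t0 => E_t0.
case: (boolP (has (fun ab => 0 < ab.1) E)) => [/hasP[ab0 ab0E ab0pos]|/hasPn nopos].
  pose m := \big[Order.min/(ab0.2 / ab0.1)]_(ab <- E | 0 < ab.1) (ab.2 / ab.1).
  have below_m t : sat_line E t -> t <= m.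
    move/allP=> E_t; rewrite /m big_seq_cond.
    by apply: le_bigmin => [|ab /andP[abE abpos]]; rewrite ler_pdivlMr // mulrC; exact: E_t.
  have t0m := below_m t0 (introT allP E_t0).
  exists m; split=> //; apply/allP => ab abE; case: (ltP 0 ab.1) => abpos.
    by rewrite mulrC -ler_pdivlMr //; exact: ge_bigmin_seq.
  exact: le_trans (ler_wnM2l abpos t0m) (E_t0 _ abE).
suff /bounded : sat_line E (M + 1) by lra.
apply/allP => ab abE; apply: le_trans (E_t0 _ abE).
by apply: ler_wnM2l; [rewrite leNgt nopos | lra].
Qed.

(* A satisfiable system on which the coordinate z is bounded above has a
   solution maximizing z: eliminate all other variables, then use line_max. *)
Lemma lp_max_coord z S y0 M : sat S y0 -> (forall y, sat S y -> y z <= M) ->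
  exists y, sat S y /\ forall y', sat S y' -> y' z <= y z.
Proof.
move=> Sy0 bounded.
pose E := elims [seq v <- enum T | v != z] S.
have projP t : sat E (fun=> t) <-> exists y, y z = t /\ sat S y.
  rewrite elimsP; split=> -[y [yt Sy]]; exists y; split=> //.
    by apply: yt; rewrite mem_filter eqxx.
  by move=> v; rewrite mem_filter mem_enum andbT negbK => /eqP ->.
pose line := [seq (\sum_v c.1 v, c.2) | c <- E].
have lineP t : sat_line line t = sat E (fun=> t).
  by rewrite /sat_line /sat all_map; apply: eq_all => c; rewrite /sat1 /lhs /= mulr_suml.
have [||m [m_sat m_max]] := @line_max line (y0 z) M.
- by rewrite lineP; apply/projP; exists y0.
- by move=> t; rewrite lineP => /projP[y [<- /bounded]].
have [y [yz Sy]] : exists y, y z = m /\ sat S y by apply/projP; rewrite -lineP.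
exists y; split=> // y' Sy'; rewrite yz; apply: m_max.
by rewrite lineP; apply/projP; exists y'.
Qed.

End FourierMotzkin.
Arguments lhs {R T} a x.
Arguments sat1 {R T} c x.
Arguments sat {R T} S x.
Arguments lp_max_coord {R T} z S y0 M.

Section LinearObjective.
Variables (R : realFieldType) (T : finType).
Implicit Types (a f : {ffun T -> R}) (x : T -> R) (y : T + unit -> R).

(* Points of T + unit are pairs (x, s) of a point x of T and a scalar s. *)
Definition xpart y : T -> R := fun u => y (inl u).
Definition extend x (s : R) : T + unit -> R :=
  fun v => if v is inl u then x u else s.

Definition coefx a (b : R) : {ffun T + unit -> R} :=
  [ffun v => if v is inl u then a u else b].

Lemma lhs_coefx a b y : lhs (coefx a b) y = lhs a (xpart y) + b * y (inr tt).
Proof.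
rewrite /lhs big_sumType (big_pred1 tt); last by case.
by under eq_bigr do rewrite ffunE; rewrite ffunE.
Qed.

Definition lift (c : constraint R T) : constraint R (T + unit)%type :=
  (coefx c.1 0, c.2).

Definition hypograph f : constraint R (T + unit)%type :=
  (coefx [ffun u => - f u] 1, 0).

Lemma sat_lift S y : sat (map lift S) y = sat S (xpart y).
Proof.
by rewrite /sat all_map; apply: eq_all => c; rewrite /= /sat1 lhs_coefx mul0r addr0.
Qed.

Lemma sat_hypograph f y : sat1 (hypograph f) y = (y (inr tt) <= lhs f (xpart y)).
Proof.
rewrite /sat1 lhs_coefx mul1r addrC -lerBrDr sub0r /lhs -sumrN.
by congr (_ <= _); apply: eq_bigr => u _; rewrite ffunE mulNr opprK.
Qed.

(* Linear programming over an ordered field: a satisfiable system on which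
   the linear objective f is bounded above attains its maximum.  Maximize s
   subject to the system and s <= f . x. *)
Lemma lp_attains S f x0 M : sat S x0 -> (forall x, sat S x -> lhs f x <= M) ->
  exists x, sat S x /\ forall x', sat S x' -> lhs f x' <= lhs f x.
Proof.
move=> Sx0 bounded; pose S' := hypograph f :: map lift S.
have S'P y : sat S' y = (y (inr tt) <= lhs f (xpart y)) && sat S (xpart y).
  by rewrite /sat /= -/(sat _ _) sat_lift sat_hypograph.
have [||y [/[!S'P]/andP[yobj Sy] ymax]] :=
  lp_max_coord (inr tt) S' (extend x0 (lhs f x0)) M.
- by rewrite S'P Sx0 lexx.
- by move=> y /[!S'P]/andP[yobj /bounded]; apply: le_trans.
exists (xpart y); split=> // x' Sx'; apply: le_trans yobj.
by apply: (ymax (extend x' (lhs f x'))); rewrite S'P Sx' lexx.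
Qed.

End LinearObjective.
Arguments lp_attains {R T} S f x0 M.

Section Network.
Variables (R : realFieldType) (N : nat) (L : 'M[R]_N) (e : 'I_N -> R) (C : R).
Implicit Types (c p : 'I_N -> R) (i j : 'I_N).

Definition unitv i (a : R) : 'I_N -> R := fun j => (j == i)%:R * a.

Lemma sum_unitvM i a (F : 'I_N -> R) : \sum_j unitv i a j * F j = a * F i.
Proof.
rewrite (bigD1 i) //= /unitv eqxx mul1r big1 ?addr0 // => j /negbTE ->.
by rewrite !mul0r.
Qed.

Lemma sum_unitv i a : \sum_j unitv i a j = a.
Proof.
by rewrite -[RHS]mulr1 -(sum_unitvM i a (fun=> 1)); under [RHS]eq_bigr do rewrite mulr1.
Qed.

(* The LP as a system of linear constraints on the variables (c, p), indexed
   by 'I_N + 'I_N: inl i stands for c_i and inr i for p_i. *)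
Definition lp_var := ('I_N + 'I_N)%type.
Implicit Types (y : lp_var -> R) (a b : 'I_N -> R).

Definition cpart y i : R := y (inl i).
Definition ppart y i : R := y (inr i).
Definition lp_point c p : lp_var -> R :=
  fun v => match v with inl i => c i | inr i => p i end.

Definition coef2 a b : {ffun lp_var -> R} :=
  [ffun v => match v with inl i => a i | inr i => b i end].

Lemma lhs_coef2 a b y :
  lhs (coef2 a b) y = \sum_i a i * cpart y i + \sum_i b i * ppart y i.
Proof.
by rewrite /lhs big_sumType; congr (_ + _); apply: eq_bigr => i _; rewrite ffunE.
Qed.

Lemma sum_mul0l (F : 'I_N -> R) : \sum_i (fun=> 0 : R) i * F i = 0.
Proof. by rewrite big1 // => i _; rewrite mul0r. Qed.

Definition node_constraints i : seq (constraint R lp_var) :=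
  [:: (coef2 (unitv i (-1)) (fun=> 0), 0);
      (coef2 (fun=> 0) (unitv i (-1)), 0);
      (coef2 (fun=> 0) (unitv i 1), pbar L i);
      (coef2 (unitv i (-1)) (fun j => unitv i 1 j - Pi L j i), e i)].

Definition budget : seq (constraint R lp_var) :=
  [:: (coef2 (fun=> 1) (fun=> 0), C); (coef2 (fun=> -1) (fun=> 0), - C)].

Definition lp_system : seq (constraint R lp_var) :=
  budget ++ flatten [seq node_constraints i | i <- enum 'I_N].

Lemma sat_budget y : sat budget y = (\sum_i cpart y i == C).
Proof.
rewrite /sat /= andbT /sat1 !lhs_coef2 !sum_mul0l !addr0 /= eq_le.
under [X in X <= C]eq_bigr do rewrite mul1r.
by under [X in X <= - C]eq_bigr do rewrite mulN1r; rewrite sumrN lerN2.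
Qed.

Lemma sat_nodeP i y : sat (node_constraints i) y <->
  [/\ 0 <= cpart y i, 0 <= ppart y i, ppart y i <= pbar L i &
      ppart y i <= funds L e (cpart y) (ppart y) i].
Proof.
rewrite /sat /= andbT /sat1 !lhs_coef2 !sum_mul0l !addr0 !add0r !sum_unitvM.
under eq_bigr do rewrite mulrBl; rewrite sumrB sum_unitvM /funds.
rewrite !mul1r !mulN1r !oppr_le0 /=; set S := \sum_(j < N) _.
have -> : (- cpart y i + (ppart y i - S) <= e i) = (ppart y i <= S + e i + cpart y i).
  by rewrite -subr_ge0 -[RHS]subr_ge0; congr (0 <= _); ring.
by split=> /and4P.
Qed.

Lemma all_flatten_map (A B : Type) (P : pred B) (f : A -> seq B) s :
  all P (flatten (map f s)) = all (fun x => all P (f x)) s.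
Proof. by elim: s => //= x s IH; rewrite all_cat IH. Qed.

Lemma lp_systemP y : sat lp_system y <-> lp_feasible L e C (cpart y) (ppart y).
Proof.
rewrite /sat all_cat -/(sat budget y) sat_budget all_flatten_map.
have nodesP : all (fun i => sat (node_constraints i) y) (enum 'I_N) <->
              forall i, sat (node_constraints i) y.
  by split=> [/allP nodes i|nodes]; [apply: nodes; rewrite mem_enum | apply/allP=> i _].
split.
- case/andP=> /eqP sum_c /nodesP nodes.
  have node i := iffLR (sat_nodeP i y) (nodes i).
  by split; [split=> // i | split=> i]; case: (node i).
- case=> [[c_ge0 sum_c] [bounds below]]; rewrite sum_c eqxx /=.
  apply/nodesP => i; apply/sat_nodeP; split; by [|case: (bounds i)].
Qed.

Section Nonnegative.
Hypothesis HL : forall i j, 0 <= L i j.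
Hypothesis He : forall i, 0 <= e i.

Lemma pbar_ge0 i : 0 <= pbar L i.
Proof. exact: sumr_ge0. Qed.

Lemma Pi_ge0 i j : 0 <= Pi L i j.
Proof. by rewrite /Pi; case: ifP => // _; apply: divr_ge0 => //; apply: pbar_ge0. Qed.

Lemma funds_mono c p q i :
  (forall j, p j <= q j) -> funds L e c p i <= funds L e c q i.
Proof.
move=> pq; rewrite /funds !lerD2r; apply: ler_sum => j _.
by apply: ler_wpM2l; [exact: Pi_ge0 | exact: pq].
Qed.

Definition bump p i d : 'I_N -> R := fun j => p j + unitv i d j.

Lemma sum_bump p i d : \sum_j bump p i d j = \sum_j p j + d.
Proof. by rewrite big_split sum_unitv. Qed.

Lemma funds_bump c p i d k :
  funds L e c (bump p i d) k = funds L e c p k + Pi L i k * d.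
Proof.
rewrite /funds /bump; under eq_bigr do rewrite mulrDr.
rewrite big_split /=.
have -> : \sum_j Pi L j k * unitv i d j = Pi L i k * d.
  by under eq_bigr do rewrite mulrC; rewrite sum_unitvM mulrC.
ring.
Qed.

(* Raising p_i by d >= 0, as far as pbar_i and funds_i allow, preserves
   feasibility: the other nodes only receive more. *)
Lemma bump_feasible c p i d : lp_feasible L e C c p -> 0 <= d ->
  p i + d <= pbar L i -> p i + d <= funds L e c p i ->
  lp_feasible L e C c (bump p i d).
Proof.
move=> [adm [bounds below]] d_ge0 d_pbar d_funds; split=> //; split=> j;
  rewrite /bump /unitv; case: (eqVneq j i) => [->|ji]; rewrite ?mul1r ?mul0r ?addr0.
- by split=> //; apply: addr_ge0 => //; exact: (bounds i).1.
- exact: bounds.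
- by rewrite funds_bump; apply: ler_wpDr => //; apply: mulr_ge0 => //; exact: Pi_ge0.
- by rewrite funds_bump; apply: ler_wpDr; [apply: mulr_ge0 => //; exact: Pi_ge0 | exact: below].
Qed.

(* An optimal solution of the LP is a clearing vector: if some p_i were below
   min(pbar_i, funds_i), raising it would keep feasibility and increase 1^T p. *)
Lemma lp_optimal_clearing c p : lp_optimal L e C c p -> is_clearing L e c p.
Proof.
move=> [feas opt] i; have [_ [bounds below]] := feas.
apply/eqP; rewrite eq_le le_min (bounds i).2 below /= leNgt; apply/negP => lt_p.
pose d := Num.min (pbar L i) (funds L e c p i) - p i.
have d_gt0 : 0 < d by rewrite subr_gt0.
have pid : p i + d = Num.min (pbar L i) (funds L e c p i) by rewrite addrC subrK.
have := opt _ _ (@bump_feasible c p i d feas (ltW d_gt0) _ _).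
by rewrite sum_bump pid !ge_min !lexx ?orbT; lra.
Qed.

Lemma clearing_pos_feasible c p : admissible C c -> is_clearing L e c p ->
  lp_feasible L e C c (fun i => Num.max (p i) 0).
Proof.
move=> [c_ge0 sum_c] clear; split=> //.
have p_le j : p j <= Num.max (p j) 0 by rewrite le_max lexx.
split=> i; first by rewrite le_max lexx orbT ge_max pbar_ge0 andbT clear ge_min lexx.
rewrite ge_max; apply/andP; split.
  by apply: le_trans (@funds_mono c p _ i p_le); rewrite {1}clear ge_min lexx orbT.
rewrite /funds !addr_ge0 // sumr_ge0 // => j _.
by rewrite mulr_ge0 ?Pi_ge0 // le_max lexx orbT.
Qed.

Lemma lp_optimal_minimizes c p c' p' : lp_optimal L e C c p ->
  admissible C c' -> is_clearing L e c' p' -> total_unpaid L p <= total_unpaid L p'.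
Proof.
move=> [_ opt] adm' clear'; have := opt _ _ (@clearing_pos_feasible c' p' adm' clear').
have : \sum_i p' i <= \sum_i Num.max (p' i) 0 by apply: ler_sum => i _; rewrite le_max lexx.
by rewrite /total_unpaid !sumrB; lra.
Qed.

(* The LP has an optimal solution: it is feasible (inject all of C at one
   node and pay nothing) and its objective is bounded by 1^T pbar. *)
Lemma lp_optimum_exists :
  (0 < N)%N -> 0 <= C -> exists c p, lp_optimal L e C c p.
Proof.
move=> N_gt0 C_ge0; pose c0 := unitv (Ordinal N_gt0) C.
have c0_ge0 i : 0 <= c0 i by rewrite /c0 /unitv mulr_ge0 ?ler0n.
have feas0 : lp_feasible L e C c0 (fun=> 0).
  split; first by split; [exact: c0_ge0 | exact: sum_unitv].
  split=> i; first by rewrite lexx pbar_ge0.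
  by rewrite /funds big1 ?add0r ?addr_ge0 // => j _; rewrite mulr0.
pose obj := coef2 (fun=> 0) (fun=> 1).
have objE y : lhs obj y = \sum_i ppart y i.
  by rewrite lhs_coef2 sum_mul0l add0r; under eq_bigr do rewrite mul1r.
have [||y [Sy ymax]] :=
  lp_attains lp_system obj (lp_point c0 (fun=> 0)) (\sum_i pbar L i).
- exact/lp_systemP.
- move=> y /lp_systemP[_ [bounds _]]; rewrite objE.
  by apply: ler_sum => i _; exact: (bounds i).2.
exists (cpart y), (ppart y); split; first exact/lp_systemP.
by move=> c' p' feas'; have := ymax (lp_point c' p'); rewrite !objE; apply; exact/lp_systemP.
Qed.

Lemma lp_optimal_solves c p : lp_optimal L e C c p ->
  is_clearing L e c p /\ forall c' p', admissible C c' -> is_clearing L e c' p' ->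
    total_unpaid L p <= total_unpaid L p'.
Proof.
move=> opt; split; first exact: (@lp_optimal_clearing c p opt).
by move=> c' p'; exact: (@lp_optimal_minimizes c p c' p' opt).
Qed.

End Nonnegative.
End Network.
Arguments lp_optimal_solves {R N L e C} HL He {c p}.
Arguments lp_optimum_exists {R N L e C} HL He.

Theorem theorem1 (R : realFieldType) (N : nat) (L : 'M[R]_N)
    (e : 'I_N -> R) (C : R)
    (HN : (0 < N)%N)
    (HL : forall i j, 0 <= L i j)
    (He : forall i, 0 <= e i)
    (HC : 0 <= C)
    (Huniq : forall c : 'I_N -> R, (forall i, 0 <= c i) ->
       exists! p : 'I_N -> R, is_clearing L e c p) :
  (* the minimization problem has a solution *)
  (exists c : 'I_N -> R, admissible C c /\
     forall (p : 'I_N -> R) (c' p' : 'I_N -> R),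
       is_clearing L e c p -> admissible C c' -> is_clearing L e c' p' ->
       total_unpaid L p <= total_unpaid L p')
  /\
  (* any optimal solution of the LP yields a minimizer *)
  (forall c p : 'I_N -> R, lp_optimal L e C c p ->
     is_clearing L e c p /\
     forall c' p' : 'I_N -> R, admissible C c' -> is_clearing L e c' p' ->
       total_unpaid L p <= total_unpaid L p').
Proof.
split=> [|c p opt]; last exact: (lp_optimal_solves HL He opt).
have [c [p opt]] := lp_optimum_exists HL He HN HC.
have [clear_p minimal] := lp_optimal_solves HL He opt.
have [[adm _] _] := opt.
exists c; split=> // q c' p' clear_q.
(* uniqueness of the clearing vector identifies q with the LP optimum p *)
have [p0 [_ uniq_p0]] := Huniq c (proj1 adm).
have -> : q = p by rewrite -(uniq_p0 _ clear_q) -(uniq_p0 _ clear_p).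
exact: minimal.
Qed.
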